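(* Let $A=\{i_1,\dots,i_a\}\subseteq\{1,\dots,d\}$ be an ordered subset, let $\alpha\in\mathbb{Z}_2^a$ be even (i.e. $\alpha_1+\dots+\alpha_a$ is even), and let $r\geq 0$. Then the X-cycle $$A^{(r,\alpha)} := h_r^\alpha(A)\,\sigma_A\,c_\alpha(A)$$ lies in $\mathcal{C}_X=\operatorname{Cent}_{\operatorname{gr}\mathcal{S}^f_d}(x_1,\dots,x_d)$, i.e. it commutes with every polynomial generator $x_1,\dots,x_d$ of $\operatorname{gr}\mathcal{S}^f_d$.
   Context: Fix $l,d\geq 1$ and a commutative ring $R$. $\operatorname{gr}\mathcal{S}^f_d$ is the associated graded superalgebra of the cyclotomic Sergeev superalgebra $\mathcal{S}^f_d$ (the quotient of the affine Sergeev superalgebra by the two-sided ideal generated by $f(\hat x_1)$, $f$ monic of degree $l$ with terms all of the same parity), filtered by putting polynomial generators in degree $1$ and Coxeter and Clifford generators in degree $0$. By the PBW theorem, $\operatorname{gr}\mathcal{S}^f_d\cong (R[x_1,\dots,x_d]/(x_1^l,\dots,x_d^l)\,\hat\otimes\, R\Sigma_d)\otimes C_d$, where $C_d$ is the Clifford superalgebra on odd generators $c_1,\dots,c_d$ with $c_i^2=1$, $c_ic_j=-c_jc_i$ ($i\neq j$); in it $x_ic_i=-c_ix_i$, $x_ic_j=c_jx_i$ ($i\ne j$), and permutations act on the indices of $x$'s and $c$'s by conjugation. For $A=\{i_1,\dots,i_a\}$, $\sigma_A$ is the cycle $(i_1\ \dots\ i_a)\in\Sigma_d$, and $c_\alpha(A)=c_{i_1}^{\alpha_1}\cdots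 c_{i_a}^{\alpha_a}$. For $\alpha\in\mathbb{Z}_2^a$ define signs $\epsilon^\alpha_i=\prod_{j<i}(-1)^{\alpha_j}$ ($\epsilon^\alpha_1=1$), and for even $\alpha$ and $r\ge 0$ define $$h_r^\alpha(A)=\sum_{r_1+\dots+r_a=(a-1)(l-1)+r}(\epsilon^\alpha_1x_{i_1})^{r_1}\cdots(\epsilon^\alpha_a x_{i_a})^{r_a}.$$ The proof uses the identity $x_{i_j}h^\alpha_r(A)=(-1)^{\alpha_j}h^\alpha_r(A)x_{\sigma_A(i_j)}$ for $j=1,\dots,a$. *)

From HB Require Import structures.
From mathcomp Require Import all_boot all_order all_algebra all_fingroup.
Set Implicit Arguments. Unset Strict Implicit. Unset Printing Implicit Defensive.
Import GRing.Theory.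
Local Open Scope ring_scope.

(* The cycle sigma_A = (i_1 i_2 ... i_a) : i_j |-> i_(j+1), i_a |-> i_1,
   every other index fixed.  [next] (path.v) is the cyclic successor in a
   sequence; we apply it to [undup s], which equals [s] when [s] is uniq. *)
Lemma cycle_fun_inj d (s : seq 'I_d) : injective (next (undup s)).
Proof. exact: can_inj (prev_next (undup_uniq s)). Qed.

Definition cycle_perm d (s : seq 'I_d) : {perm 'I_d} := perm (@cycle_fun_inj d s).

Section XCycle.
Variables (A : pzRingType) (d l : nat).
Variables (x c : 'I_d -> A) (sig : {perm 'I_d} -> A).

Definition eps a (alpha : a.-tuple bool) (j : 'I_a) : A :=
  (-1) ^+ count id (take j alpha).

Definition hra a (t : a.-tuple 'I_d) (alpha : a.-tuple bool) (r : nat) : A :=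
  let N := ((a - 1) * (l - 1) + r)%N in
  \sum_(rr : {ffun 'I_a -> 'I_N.+1} | (\sum_(j < a) (rr j : nat))%N == N)
     \prod_(j < a) (eps alpha j * x (tnth t j)) ^+ rr j.

Definition calpha a (t : a.-tuple 'I_d) (alpha : a.-tuple bool) : A :=
  \prod_(j < a) (if tnth alpha j then c (tnth t j) else 1).

Definition Xcycle a (t : a.-tuple 'I_d) (alpha : a.-tuple bool) (r : nat) : A :=
  hra t alpha r * sig (cycle_perm t) * calpha t alpha.
End XCycle.

From mathcomp Require Import all_boot all_order all_algebra all_fingroup zify.
Set Implicit Arguments. Unset Strict Implicit. Unset Printing Implicit Defensive.
Import GRing.Theory.
Local Open Scope ring_scope.

(* Put y_j = eps_j x_(i_j): these commute and y_j^l = 0, and h_r^alpha(A) is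
   the sum of all monomials of degree N = (a-1)(l-1)+r in the y_j.  In
   y_j h_r^alpha(A) only monomials of degree N+1 with every exponent in
   [1, l-1] survive, so y_j h_r^alpha(A) does not depend on j.  Hence
   x_(i_j) h = eps_j eps_(j+1) h x_(i_(j+1)) = (-1)^(alpha_j) h x_(sigma_A i_j),
   where evenness of alpha handles the wrap-around j = a.  The same sign
   (-1)^(alpha_j) appears when x_(i_j) moves past c_alpha(A), and sigma_A turns
   x_(sigma_A k) back into x_k, so the two signs cancel. *)

Section NoncommutativeProducts.
Variable R : pzRingType.

Lemma prodr_factor_eq0 (I : eqType) (s : seq I) (F : I -> R) i :
  i \in s -> F i = 0 -> \prod_(k <- s) F k = 0.
Proof.
elim: s => [//|k s IHs]; rewrite inE big_cons => /orP[/eqP<- ->|/IHs si /si ->].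
  by rewrite mul0r.
by rewrite mulr0.
Qed.

Lemma mulr_prod_at (I : eqType) (s : seq I) (F : I -> R) z j :
  uniq s -> j \in s -> (forall i, GRing.comm z (F i)) ->
  z * \prod_(i <- s) F i = \prod_(i <- s) (if i == j then z * F i else F i).
Proof.
move=> + + zF; elim: s => [//|i s IHs] /= /andP[iNs us].
rewrite inE !big_cons; case: eqVneq => [-> _|ij /= js].
  rewrite mulrA; congr (_ * _); apply: eq_big_seq => k ks.
  by case: eqVneq => // kj; rewrite -kj ks in iNs.
by rewrite mulrA zF -mulrA IHs.
Qed.

Lemma mulr_prod_skew (I : Type) (s : seq I) (F : I -> R) (b : I -> nat) z :
  (forall i, z * F i = (-1) ^+ b i * F i * z) ->
  z * \prod_(i <- s) F i = (-1) ^+ (\sum_(i <- s) b i)%N * \prod_(i <- s) F i * z.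
Proof.
move=> zF; elim: s => [|i s IHs]; first by rewrite !big_nil expr0 !mul1r mulr1.
rewrite !big_cons exprD mulrA zF -!mulrA IHs !mulrA; congr (_ * _ * _).
by rewrite -!mulrA (commr_sign (F i)).
Qed.

End NoncommutativeProducts.

Lemma exists_large_part a l (F : 'I_a -> nat) (m : 'I_a) :
  F m = 0%N -> ((a - 1) * l < \sum_(i < a) F i)%N -> exists i, (l < F i)%N.
Proof.
move=> Fm0 large; have [/existsP[i li]|/existsPn small] := boolP [exists i, (l < F i)%N].
  by exists i.
suff : (\sum_(i < a) F i <= (a - 1) * l)%N by rewrite leqNgt large.
rewrite (bigD1 m) //= Fm0 add0n subn1.
have -> : a.-1 = #|predC1 m| by rewrite cardC1 card_ord.
by rewrite -sum_nat_const; apply: leq_sum => i _; rewrite leqNgt small.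
Qed.

Section TruncatedCompleteSum.
Variables (R : pzRingType) (l a r : nat) (y : 'I_a -> R).
Hypotheses (y_comm : forall i j, y i * y j = y j * y i)
  (y_nil : forall i, y i ^+ l = 0) (l_gt0 : (0 < l)%N).

Let N := ((a - 1) * (l - 1) + r)%N.
Local Notation expvec := {ffun 'I_a -> 'I_N.+1}.

Definition hsum : R :=
  \sum_(e : expvec | (\sum_(j < a) (e j : nat))%N == N) \prod_(j < a) y j ^+ e j.

Definition pos_off (j : 'I_a) (e : expvec) :=
  ((\sum_(m < a) (e m : nat))%N == N) && [forall m, (m != j) ==> (0 < e m)%N].

Definition bumped_monomial (j : 'I_a) (e : expvec) :=
  \prod_(m < a) y m ^+ (e m + (m == j)).

Lemma sum_delta (j : 'I_a) : (\sum_(m < a) (m == j : nat))%N = 1%N.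
Proof. by rewrite (bigD1 j) //= eqxx big1 // => m /negPf ->. Qed.

(* In [y j * hsum] every surviving monomial has degree N + 1 with all exponents
   below l, so by pigeonhole it has no zero exponent. *)
Lemma mulr_hsum j : y j * hsum = \sum_(e | pos_off j e) bumped_monomial j e.
Proof.
have yX_comm i n : GRing.comm (y j) (y i ^+ n) by apply/commrX/y_comm.
rewrite /hsum mulr_sumr.
rewrite (bigID (fun e : expvec => [forall m, (m != j) ==> (0 < e m)%N])) /=.
rewrite [X in _ + X]big1 ?addr0 => [|e /andP[/eqP deg_e]].
  apply: eq_bigr => e _.
  rewrite (mulr_prod_at (j := j) (index_enum_uniq _)) ?mem_index_enum //.
  by apply: eq_bigr => m _; case: eqVneq => [->|_]; rewrite ?addn1 ?exprS ?addn0.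
case/forallPn => m; rewrite negb_imply -eqn0Ngt => /andP[mj /eqP em0].
rewrite (mulr_prod_at (j := j) (index_enum_uniq _)) ?mem_index_enum //.
have [i li] : exists i, (l - 1 < e i + (i == j))%N.
  apply: (@exists_large_part _ _ _ m); first by rewrite em0 (negPf mj).
  by rewrite big_split /= deg_e sum_delta /N addn1 ltnS leq_addr.
apply: (prodr_factor_eq0 (mem_index_enum i)).
have y_zero n : (l <= n)%N -> y i ^+ n = 0.
  by move=> ln; rewrite -(subnK ln) exprD y_nil mulr0.
by case: eqVneq li => [<-|_] /=; rewrite ?addn1 ?addn0 => li; rewrite -?exprS y_zero //; lia.
Qed.

Definition exch (j j' : 'I_a) (e : expvec) : expvec :=
  [ffun m => inord (e m + (m == j) - (m == j'))].

Section Exchange.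
Variables (j j' : 'I_a) (e : expvec).
Hypotheses (jj' : j != j') (e_pos : pos_off j e).

Lemma exchE m : (exch j j' e m + (m == j') = e m + (m == j))%N.
Proof.
case/andP: e_pos => /eqP deg_e /forallP e_gt0.
have ej'_gt0 : (0 < e j')%N by have := e_gt0 j'; rewrite eq_sym jj'.
have ejj' : (e j + e j' <= \sum_(m < a) (e m : nat))%N.
  by rewrite (bigD1 j) //= leq_add2l (bigD1 j') 1?eq_sym //= leq_addr.
rewrite deg_e in ejj'.
rewrite ffunE inordK.
  case: (eqVneq m j) => [->|mj]; first by rewrite (negPf jj') /=; lia.
  by case: (eqVneq m j') => [->|_] /=; lia.
case: (eqVneq m j) => [->|mj]; first by rewrite (negPf jj') /=; lia.
by case: (eqVneq m j') => [->|_] /=; have := ltn_ord (e m); lia.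
Qed.

Lemma pos_off_exch : pos_off j' (exch j j' e).
Proof.
case/andP: e_pos => /eqP deg_e /forallP e_gt0; apply/andP; split.
  have : (\sum_(m < a) (exch j j' e m + (m == j')) = \sum_(m < a) (e m + (m == j)))%N.
    by apply: eq_bigr => m _; apply: exchE.
  by rewrite !big_split /= !sum_delta deg_e => /eqP; rewrite eqn_add2r.
apply/forallP => m; apply/implyP => mj'; have := exchE m; rewrite (negPf mj') addn0 => ->.
by case: (eqVneq m j) => [_|mj]; rewrite ?addn1 // addn0; have := e_gt0 m; rewrite mj.
Qed.

Lemma exchK : exch j' j (exch j j' e) = e.
Proof.
apply/ffunP => m; apply/val_inj; rewrite ffunE /= exchE.
by case: (eqVneq m j) => [->|_]; rewrite ?addn1 ?subn1 ?addn0 ?subn0 inord_val.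
Qed.

Lemma bumped_monomial_exch : bumped_monomial j' (exch j j' e) = bumped_monomial j e.
Proof. by apply: eq_bigr => m _; rewrite exchE. Qed.

End Exchange.

Lemma mulr_hsum_indep j j' : y j * hsum = y j' * hsum.
Proof.
have [<-//|jj'] := eqVneq j j'; have j'j : j' != j by rewrite eq_sym.
rewrite !mulr_hsum (reindex_onto (exch j' j) (exch j j')); last first.
  by move=> e; apply: exchK.
have pos_offE e :
    pos_off j (exch j' j e) && (exch j j' (exch j' j e) == e) = pos_off j' e.
  apply/idP/idP => [/andP[e_pos /eqP <-]|e_pos]; first exact: pos_off_exch.
  by rewrite exchK // eqxx andbT pos_off_exch.
apply: eq_big => [//|e]; rewrite pos_offE => e_pos.
exact: bumped_monomial_exch.
Qed.

End TruncatedCompleteSum.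

Lemma next_nth_uniq (T : eqType) (x0 : T) (s : seq T) i :
  uniq s -> (i < size s)%N -> next s (nth x0 s i) = nth x0 s (i.+1 %% size s).
Proof.
move=> s_uniq lt_is; rewrite next_nth mem_nth // index_uniq //.
case: s s_uniq lt_is => [//|z s] _ /=; rewrite ltnS leq_eqVlt => /predU1P[->|lt_is].
  by rewrite modnn nth_default.
by rewrite modn_small ?ltnS //= (set_nth_default x0 z lt_is).
Qed.

Lemma next_tnth (T : eqType) n (t : n.-tuple T) (j : 'I_n) :
  uniq t -> next t (tnth t j) = tnth t (ordS j).
Proof.
move=> t_uniq; have x0 := tnth t j.
by rewrite !(tnth_nth x0) next_nth_uniq ?size_tuple.
Qed.

Lemma cycle_permE d (t : seq 'I_d) : uniq t -> cycle_perm t =1 next t.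
Proof. by move=> t_uniq k; rewrite permE undup_id. Qed.

Lemma eps_mul_ordS (R : pzRingType) a (alpha : a.-tuple bool) (j : 'I_a) :
  ~~ odd (count id alpha) -> eps R alpha j * eps R alpha (ordS j) = (-1) ^+ tnth alpha j.
Proof.
move=> alpha_even; rewrite /eps -exprD -[LHS]signr_odd -[RHS]signr_odd oddb.
congr (_ ^+ nat_of_bool _).
have count_take_succ : count id (take j.+1 alpha) = (count id (take j alpha) + tnth alpha j)%N.
  by rewrite (take_nth false) ?size_tuple // -cats1 count_cat /= addn0 (tnth_nth false).
have [lt_ja|] := ltnP j.+1 a.
  by rewrite /= modn_small // count_take_succ !oddD addKb oddb.
move=> le_aj; have ja : j.+1 = a by apply/eqP; rewrite eqn_leq ltn_ord le_aj.
rewrite /= ja modnn take0 addn0.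
have count_alpha : count id alpha = count id (take j.+1 alpha).
  by rewrite take_oversize // size_tuple ja.
move: alpha_even; rewrite count_alpha count_take_succ oddD oddb.
by case: (odd _); case: (tnth _ _).
Qed.

(* The number of factors c_k in c_alpha(A). *)
Definition cmult d a (t : a.-tuple 'I_d) (alpha : a.-tuple bool) (k : 'I_d) : nat :=
  \sum_(j < a) (tnth alpha j && (tnth t j == k)).

Lemma cmult_tnth d a (t : a.-tuple 'I_d) (alpha : a.-tuple bool) j :
  uniq t -> cmult t alpha (tnth t j) = tnth alpha j.
Proof.
move=> t_uniq; rewrite /cmult (bigD1 j) //= eqxx andbT big1 ?addn0 // => i ij.
by rewrite (inj_eq (tuple_uniqP _ t_uniq)) (negPf ij) andbF.
Qed.

Lemma cmult_notin d a (t : a.-tuple 'I_d) (alpha : a.-tuple bool) k :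
  k \notin t -> cmult t alpha k = 0%N.
Proof.
move=> k_notin; rewrite /cmult big1 // => j _.
case: eqVneq => [tjk|_]; last by rewrite andbF.
by rewrite -tjk mem_tnth in k_notin.
Qed.

Section XCycle.
Variables (R : pzRingType) (l d : nat) (x c : 'I_d -> R).

Lemma mulx_calpha a (t : a.-tuple 'I_d) (alpha : a.-tuple bool) k :
    (forall i, x i * c i = - (c i * x i)) ->
    (forall i j, i != j -> x i * c j = c j * x i) ->
  x k * calpha c t alpha = (-1) ^+ cmult t alpha k * calpha c t alpha * x k.
Proof.
move=> xc_same xc_diff; apply: mulr_prod_skew => j.
case: (tnth alpha j) => /=; last by rewrite expr0 !mul1r mulr1.
have [<-|tjk] := eqVneq (tnth t j) k; first by rewrite expr1 mulN1r mulNr xc_same.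
by rewrite expr0 mul1r xc_diff // eq_sym.
Qed.

Hypotheses (x_comm : forall i j, x i * x j = x j * x i)
  (x_nil : forall i, x i ^+ l = 0) (l_gt0 : (0 < l)%N).
Variables (a r : nat) (t : a.-tuple 'I_d) (alpha : a.-tuple bool).

Let y j := eps R alpha j * x (tnth t j).

Lemma hra_hsum : hra l x t alpha r = hsum l r y.
Proof. by []. Qed.

Lemma commr_x_hra i : GRing.comm (x i) (hra l x t alpha r).
Proof.
apply: commr_sum => e _; apply: commr_prod => m _.
by apply/commrX/commrM; [apply: commr_sign | apply: x_comm].
Qed.

Lemma mulx_hra_cycle k : uniq t -> ~~ odd (count id alpha) ->
  x k * hra l x t alpha r =
    (-1) ^+ cmult t alpha k * hra l x t alpha r * x (cycle_perm t k).
Proof.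
move=> t_uniq alpha_even; set h := hra l x t alpha r.
rewrite cycle_permE //; have [/tnthP[j ->]|k_notin] := boolP (k \in t); last first.
  by rewrite cmult_notin // next_nth (negPf k_notin) expr0 mul1r commr_x_hra.
have y_comm i j' : y i * y j' = y j' * y i.
  apply/commr_sym/commrM; first exact: commr_sign.
  by apply/commr_sym/commrM; [apply: commr_sign | apply: x_comm].
have y_nil i : y i ^+ l = 0.
  by rewrite exprMn_comm ?x_nil ?mulr0 //; apply/commr_sym/commr_sign.
have y_h : y (ordS j) * h = y j * h.
  by rewrite /h hra_hsum; apply: mulr_hsum_indep.
rewrite cmult_tnth // next_tnth // -(eps_mul_ordS R j alpha_even) -!mulrA.
rewrite -commr_x_hra -/h (mulrA (eps R alpha (ordS j))) -/(y (ordS j)) y_h.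
by rewrite mulrA signrMK.
Qed.

End XCycle.

Theorem mainTheorem8 (R : comNzRingType) (G : algType R) (l d : nat)
  (x c : 'I_d -> G) (sig : {perm 'I_d} -> G)
  (hl : (0 < l)%N) (hd : (0 < d)%N)
  (x_comm : forall i j, x i * x j = x j * x i)
  (x_nil : forall i, x i ^+ l = 0)
  (c_sq : forall i, c i * c i = 1)
  (c_anti : forall i j, i != j -> c i * c j = - (c j * c i))
  (xc_same : forall i, x i * c i = - (c i * x i))
  (xc_diff : forall i j, i != j -> x i * c j = c j * x i)
  (sig1 : sig 1%g = 1)
  (sigM : forall w1 w2 : {perm 'I_d}, sig (w1 * w2)%g = sig w2 * sig w1)
  (sig_x : forall (w : {perm 'I_d}) i, sig w * x i = x (w i) * sig w)
  (sig_c : forall (w : {perm 'I_d}) i, sig w * c i = c (w i) * sig w)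
  (a : nat) (t : a.-tuple 'I_d) (alpha : a.-tuple bool) (r : nat)
  (ha : (0 < a)%N) (ht : uniq t) (halpha : ~~ odd (count id alpha)) :
  forall k : 'I_d,
    x k * Xcycle l x c sig t alpha r = Xcycle l x c sig t alpha r * x k.
Proof.
move=> k; rewrite /Xcycle; set h := hra l x t alpha r; set ca := calpha c t alpha.
have x_h := mulx_hra_cycle x_comm x_nil hl r k ht halpha.
have x_ca := mulx_calpha t alpha k xc_same xc_diff.
set n := cmult t alpha k in x_h x_ca; rewrite -/h in x_h; rewrite -/ca in x_ca.
rewrite !mulrA x_h -(mulrA _ (x _)) -sig_x -!mulrA x_ca.
rewrite -(mulrA _ ca) (mulrA (sig _)) (commr_sign (sig _) n).
by rewrite -mulrA [in LHS](mulrA h) (commr_sign h n) -mulrA signrMK.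
Qed.
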